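(* For $i=1,2$ let $X_i$ be a set with a distinguished point $e_i\in X_i$ and let $K_i\colon X_i\times X_i\to\mathbb{R}$ be a kernel with $K_i(x,y)=K_i(y,x)\geq0$ and $K_i(x,x)=0$ that is conditionally strictly negative definite. Let $X=X_1\sqcup X_2/\!\sim$ where $e_1\sim e_2$ (so $X_1,X_2\subseteq X$ with $X_1\cap X_2=\{e_1\}=\{e_2\}$), and define $K\colon X\times X\to\mathbb{R}$ by $K(x,y)=K_1(x,y)$ if $x,y\in X_1$; $K(x,y)=K_1(x,e_1)+K_2(e_2,y)$ if $x\in X_1,y\in X_2$; $K(x,y)=K_2(x,e_2)+K_1(e_1,y)$ if $x\in X_2,y\in X_1$; $K(x,y)=K_2(x,y)$ if $x,y\in X_2$. Then $K$ is well defined, satisfies $K(x,y)=K(y,x)\ge0$, $K(x,x)=0$, and is conditionally strictly negative definite.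
   Context: A kernel $K$ on a set $Y$ is conditionally strictly negative definite if for every finitely supported $\lambda\colon Y\to\mathbb{C}$, $\lambda\neq0$, with $\sum_y\lambda(y)=0$ one has $\sum_{x,y}\lambda(x)\overline{\lambda(y)}K(x,y)<0$. *)

From HB Require Import structures.
From mathcomp Require Import all_boot all_order all_algebra.
From mathcomp Require Import finmap.
From mathcomp Require Import reals.
From mathcomp Require Import complex.
Set Implicit Arguments. Unset Strict Implicit. Unset Printing Implicit Defensive.
Import Order.TTheory GRing.Theory Num.Theory.
Local Open Scope ring_scope.
Local Open Scope fset_scope.

Definition csnd (R : realType) (Y : choiceType) (K : Y -> Y -> R) : Prop :=
  forall lam : {fsfun Y -> R[i] for fun => 0},
    lam != [fsfun] ->
    \sum_(y <- finsupp lam) lam y = 0 ->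
    \sum_(x <- finsupp lam) \sum_(y <- finsupp lam)
        lam x * conjc (lam y) * ((K x y)%:C)%C < 0.

(* The wedge X = X1 |_| X2 / (e1 ~ e2), modelled as X1 + (X2 \ {e2}). *)
Definition wedge (X1 X2 : choiceType) (e2 : X2) : choiceType :=
  (X1 + {x : X2 | x != e2})%type.

Definition inj1 (X1 X2 : choiceType) (e2 : X2) (x : X1) : wedge X1 e2 := inl x.

Definition inj2 (X1 X2 : choiceType) (e1 : X1) (e2 : X2) (x : X2) : wedge X1 e2 :=
  match boolP (x != e2) with
  | AltTrue h => inr (exist _ x h)
  | AltFalse _ => inl e1
  end.

Definition wedgeK (R : realType) (X1 X2 : choiceType) (e1 : X1) (e2 : X2)
  (K1 : X1 -> X1 -> R) (K2 : X2 -> X2 -> R) (x y : wedge X1 e2) : R :=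
  match x, y with
  | inl a, inl b => K1 a b
  | inl a, inr b => K1 a e1 + K2 e2 (sval b)
  | inr a, inl b => K2 (sval a) e2 + K1 e1 b
  | inr a, inr b => K2 (sval a) (sval b)
  end.

(* Write r1 : X -> X1 and r2 : X -> X2 for the retractions of the wedge that
   collapse the other summand to the base point.  Since the kernels vanish on
   the diagonal, K x y = K1 (r1 x) (r1 y) + K2 (r2 x) (r2 y).  Hence the
   quadratic form of K at lambda is the sum of the quadratic forms of K1 and K2
   at the pushforwards of lambda along r1 and r2.  Pushing forward preserves
   the total mass 0, so both terms are <= 0, and one of them is < 0 unless both
   pushforwards vanish; on the wedge that forces lambda = 0. *)

From HB Require Import structures.
From mathcomp Require Import all_boot all_order all_algebra.
From mathcomp Require Import finmap.
From mathcomp Require Import reals.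
From mathcomp Require Import complex.
Set Implicit Arguments. Unset Strict Implicit. Unset Printing Implicit Defensive.
Import Order.TTheory GRing.Theory Num.Theory.
Local Open Scope fset_scope.
Local Open Scope ring_scope.

Section QuadraticForm.
Variable R : realType.
Local Notation C := R[i].
Local Notation fsC Y := {fsfun Y -> C for fun => 0}.

Definition qform (Y : choiceType) (K : Y -> Y -> R) (lam : fsC Y) : C :=
  \sum_(x <- finsupp lam) \sum_(y <- finsupp lam)
    lam x * conjc (lam y) * (K x y)%:C%C.

Lemma qform_fsubset (Y : choiceType) (K : Y -> Y -> R) (lam : fsC Y)
    (A : {fset Y}) :
  finsupp lam `<=` A ->
  qform K lam = \sum_(x <- A) \sum_(y <- A) lam x * conjc (lam y) * (K x y)%:C%C.
Proof.
move=> suppA; rewrite /qform (big_fset_incl _ suppA); last first.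
  by move=> x _ /fsfun_dflt->; rewrite big1 // => y _; rewrite !mul0r.
apply: eq_bigr => x _; rewrite (big_fset_incl _ suppA) // => y _ /fsfun_dflt->.
by rewrite rmorph0 mulr0 mul0r.
Qed.

Lemma eq_qform (Y : choiceType) (K K' : Y -> Y -> R) (lam : fsC Y) :
  K =2 K' -> qform K lam = qform K' lam.
Proof. by move=> KK'; apply: eq_bigr => x _; apply: eq_bigr => y _; rewrite KK'. Qed.

Lemma qformD (Y : choiceType) (K K' : Y -> Y -> R) (lam : fsC Y) :
  qform (fun x y => K x y + K' x y) lam = qform K lam + qform K' lam.
Proof.
rewrite /qform -big_split; apply: eq_bigr => x _; rewrite -big_split.
by apply: eq_bigr => y _; rewrite rmorphD mulrDr.
Qed.

Lemma qform_le0 (Y : choiceType) (K : Y -> Y -> R) (lam : fsC Y) :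
  csnd K -> \sum_(y <- finsupp lam) lam y = 0 -> qform K lam <= 0.
Proof.
move=> K_csnd sum0; have [->|lam_neq0] := eqVneq lam [fsfun].
  by rewrite /qform finsupp0 big_seq_fset0.
exact/ltW/K_csnd.
Qed.

Lemma sum_fsfun_pred1 (Y : choiceType) (lam : fsC Y) (x : Y) :
  \sum_(y <- finsupp lam | y == x) lam y = lam x.
Proof.
have [x_supp|x_nsupp] := boolP (x \in finsupp lam).
  by rewrite (@fbig_pred1_inj _ _ _ _ _ _ id).
rewrite fsfun_dflt // big1_fset // => y y_supp /eqP yx.
by move: x_nsupp; rewrite -yx y_supp.
Qed.

Lemma sum_fsfun_single (Y : choiceType) (lam : fsC Y) (x : Y) :
  (forall y, y != x -> lam y = 0) -> \sum_(y <- finsupp lam) lam y = lam x.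
Proof.
move=> lam0; rewrite -sum_fsfun_pred1 [RHS]big_mkcond /=.
by apply: eq_bigr => y _; case: eqVneq => // /lam0.
Qed.

Section Pushforward.
Variables (Y Z : choiceType) (f : Y -> Z).

Definition push (lam : fsC Y) : fsC Z :=
  [fsfun z in f @` finsupp lam => \sum_(y <- finsupp lam | f y == z) lam y | 0].

Lemma pushE (lam : fsC Y) z : push lam z = \sum_(y <- finsupp lam | f y == z) lam y.
Proof.
rewrite fsfunE; case: ifP => // z_nimg.
rewrite big1_fset // => y y_supp /eqP fyz.
by move: z_nimg; rewrite -fyz in_imfset.
Qed.

Lemma finsupp_push (lam : fsC Y) : finsupp (push lam) `<=` f @` finsupp lam.
Proof. by apply/fsubsetP => z; rewrite mem_finsupp fsfunE; case: ifP; rewrite ?eqxx. Qed.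

Lemma push_fiber1 (lam : fsC Y) z y :
  (forall x, (f x == z) = (x == y)) -> push lam z = lam y.
Proof. by move=> fiber_y; rewrite pushE (eq_bigl _ _ fiber_y) sum_fsfun_pred1. Qed.

Lemma big_fiber (A : {fset Y}) (g : Y -> C) (G : Z -> C) :
  \sum_(z <- f @` A) (\sum_(x <- A | f x == z) g x) * G z =
  \sum_(x <- A) g x * G (f x).
Proof.
under eq_bigr => z _ do rewrite mulr_suml big_mkcond.
rewrite exchange_big /= big_seq [RHS]big_seq; apply: eq_bigr => x xA.
rewrite (eq_bigr (fun z => if z == f x then g x * G (f x) else 0)); last first.
  by move=> z _; rewrite eq_sym; case: eqP => // ->.
rewrite -big_mkcond -big_filter filter_pred1_uniq ?fset_uniq ?in_imfset //.
by rewrite big_seq1.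
Qed.

Lemma sum_push (lam : fsC Y) :
  \sum_(z <- finsupp (push lam)) push lam z = \sum_(y <- finsupp lam) lam y.
Proof.
rewrite (big_fset_incl _ (finsupp_push lam)); last by move=> z _ /fsfun_dflt.
have := big_fiber (finsupp lam) lam (fun _ => 1).
rewrite (eq_bigr _ (fun z _ => mulr1 _)) [RHS](eq_bigr _ (fun z _ => mulr1 _)).
by move=> <-; apply: eq_bigr => z _; rewrite pushE.
Qed.

Lemma qform_push (K : Z -> Z -> R) (lam : fsC Y) :
  qform (fun x y => K (f x) (f y)) lam = qform K (push lam).
Proof.
rewrite (qform_fsubset _ (finsupp_push lam)) /qform; symmetry.
have inner z : \sum_(w <- f @` finsupp lam) push lam z * conjc (push lam w) * (K z w)%:C%C
    = push lam z * \sum_(y <- finsupp lam) conjc (lam y) * (K z (f y))%:C%C.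
  rewrite -(big_fiber _ (fun y => conjc (lam y)) (fun w => (K z w)%:C%C)) mulr_sumr.
  by apply: eq_bigr => w _; rewrite [push lam w]pushE rmorph_sum mulrA.
rewrite (eq_bigr _ (fun z _ => inner z)).
under eq_bigr => z _ do rewrite pushE.
rewrite big_fiber; apply: eq_bigr => x _.
by rewrite mulr_sumr; apply: eq_bigr => y _; rewrite mulrA.
Qed.

End Pushforward.

Lemma csnd_pullbackD (Y Z1 Z2 : choiceType) (f1 : Y -> Z1) (f2 : Y -> Z2)
    (K1 : Z1 -> Z1 -> R) (K2 : Z2 -> Z2 -> R) (K : Y -> Y -> R) :
  csnd K1 -> csnd K2 ->
  K =2 (fun x y => K1 (f1 x) (f1 y) + K2 (f2 x) (f2 y)) ->
  (forall lam : fsC Y, \sum_(y <- finsupp lam) lam y = 0 ->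
     push f1 lam = [fsfun] -> push f2 lam = [fsfun] -> lam = [fsfun]) ->
  csnd K.
Proof.
move=> K1_csnd K2_csnd KE push_inj lam lam_neq0 sum0.
change (qform K lam < 0).
rewrite (eq_qform _ KE) qformD (qform_push f1) (qform_push f2).
have sum1 : \sum_(z <- finsupp (push f1 lam)) push f1 lam z = 0 by rewrite sum_push.
have sum2 : \sum_(z <- finsupp (push f2 lam)) push f2 lam z = 0 by rewrite sum_push.
have [push1_0|push1_neq0] := eqVneq (push f1 lam) [fsfun]; last first.
  by have := ltr_leD (K1_csnd _ push1_neq0 sum1) (qform_le0 K2_csnd sum2); rewrite addr0.
have [push2_0|push2_neq0] := eqVneq (push f2 lam) [fsfun]; last first.
  by have := ler_ltD (qform_le0 K1_csnd sum1) (K2_csnd _ push2_neq0 sum2); rewrite addr0.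
by move: lam_neq0; rewrite (push_inj lam) ?eqxx.
Qed.

End QuadraticForm.

Section Wedge.
Variables (X1 X2 : choiceType) (e1 : X1) (e2 : X2).
Local Notation X := (wedge X1 e2).

Definition wedge_retr1 (x : X) : X1 := if x is inl a then a else e1.
Definition wedge_retr2 (x : X) : X2 := if x is inr b then val b else e2.

(* Generalising the index of [alt_spec] is what makes the dependent match on
   [boolP] in [inj2] eliminable. *)
Lemma inj2_cases (P : X -> Prop) y :
  (y = e2 -> P (inl e1)) -> (forall h : y != e2, P (inr (exist _ y h))) ->
  P (inj2 e1 e2 y).
Proof.
move=> Pe2 Pneq; rewrite /inj2.
suff: forall c (a : alt_spec (y != e2) (y != e2) c),
  P (match a with AltTrue h => inr (exist _ y h) | AltFalse _ => inl e1 end) by apply.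
by move=> c [h|/negPn/eqP]; [apply: Pneq | apply: Pe2].
Qed.

Lemma inj2_base : inj2 e1 e2 e2 = inl e1.
Proof. by elim/inj2_cases: _ => // h; exfalso; move: h; rewrite eqxx. Qed.

Lemma wedge_retr1_inj2 y : wedge_retr1 (inj2 e1 e2 y) = e1.
Proof. by elim/inj2_cases: _. Qed.

Lemma wedge_retr2_inj2 y : wedge_retr2 (inj2 e1 e2 y) = y.
Proof. by elim/inj2_cases: _ => // ->. Qed.

Lemma wedgeK_retr (R : realType) (K1 : X1 -> X1 -> R) (K2 : X2 -> X2 -> R) :
  (forall x, K1 x x = 0) -> (forall y, K2 y y = 0) ->
  wedgeK e1 K1 K2 =2 fun x y =>
    K1 (wedge_retr1 x) (wedge_retr1 y) + K2 (wedge_retr2 x) (wedge_retr2 y).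
Proof.
by move=> K1diag K2diag [a|[a ?]] [b|[b ?]] /=;
  rewrite ?K1diag ?K2diag ?addr0 ?add0r // addrC.
Qed.

Lemma wedge_push_eq0 (R : realType) (lam : {fsfun X -> R[i] for fun => 0}) :
  \sum_(x <- finsupp lam) lam x = 0 ->
  push wedge_retr1 lam = [fsfun] -> push wedge_retr2 lam = [fsfun] ->
  lam = [fsfun].
Proof.
move=> sum0 push1_0 push2_0.
(* Off the base point the fibres of the retractions are singletons. *)
have lam_inl a : a != e1 -> lam (inl a) = 0.
  move=> a_neq; rewrite -(@push_fiber1 _ _ _ wedge_retr1 lam a (inl a)) ?push1_0 ?fsfun0E //.
  by case=> [a'|b] //=; rewrite eq_sym (negbTE a_neq).
have lam_inr b : lam (inr b) = 0.
  rewrite -(@push_fiber1 _ _ _ wedge_retr2 lam (val b) (inr b)) ?push2_0 ?fsfun0E //.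
  by case=> [a|b'] /=; [rewrite eq_sym (negbTE (valP b)) | rewrite val_eqE].
have lam_off_base x : x != inl e1 -> lam x = 0.
  case: x => [a a_neq|b _]; last exact: lam_inr.
  by apply: lam_inl; apply: contra a_neq => /eqP->.
apply/fsfunP => x; rewrite fsfun0E.
have [->|] := eqVneq x (inl e1); last exact: lam_off_base.
by rewrite -(sum_fsfun_single lam_off_base).
Qed.

End Wedge.

Theorem mainTheorem6 (R : realType) (X1 X2 : choiceType) (e1 : X1) (e2 : X2)
  (K1 : X1 -> X1 -> R) (K2 : X2 -> X2 -> R)
  (K1sym : forall x y, K1 x y = K1 y x) (K1ge0 : forall x y, 0 <= K1 x y)
  (K1diag : forall x, K1 x x = 0) (K1csnd : csnd K1)
  (K2sym : forall x y, K2 x y = K2 y x) (K2ge0 : forall x y, 0 <= K2 x y)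
  (K2diag : forall x, K2 x x = 0) (K2csnd : csnd K2) :
  let K := wedgeK e1 K1 K2 in
  let i1 := @inj1 X1 X2 e2 in
  let i2 := @inj2 X1 X2 e1 e2 in
  (* K is well defined: it satisfies all four defining clauses on X1, X2 *)
  [/\ i1 e1 = i2 e2,
      (forall x y : X1, K (i1 x) (i1 y) = K1 x y),
      (forall (x : X1) (y : X2), K (i1 x) (i2 y) = K1 x e1 + K2 e2 y),
      (forall (x : X2) (y : X1), K (i2 x) (i1 y) = K2 x e2 + K1 e1 y)
    & (forall x y : X2, K (i2 x) (i2 y) = K2 x y)] /\
  [/\ (forall x y, K x y = K y x), (forall x y, 0 <= K x y),
      (forall x, K x x = 0) & csnd K].
Proof.
move=> K i1 i2; rewrite {}/K {}/i1 {}/i2.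
have KE := wedgeK_retr (e2 := e2) e1 K1diag K2diag.
split.
- split=> [|x y|x y|x y|x y]; rewrite ?inj2_base // KE;
    by rewrite ?wedge_retr1_inj2 ?wedge_retr2_inj2 /= ?K1diag ?K2diag ?addr0 ?add0r // addrC.
- split=> [x y|x y|x|].
  + by rewrite !KE K1sym K2sym.
  + by rewrite KE addr_ge0.
  + by rewrite KE K1diag K2diag addr0.
  + exact: csnd_pullbackD K1csnd K2csnd KE (@wedge_push_eq0 _ _ e1 e2 R).
Qed.
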